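(* Let $n\ge 5$ and let $\sigma$ be a maximal simplex of $\Delta_n$ that covers all places. If $|N(w)\cap\sigma|\ge 2$ for all $w\in\sigma$, then there exist $v,w\in\sigma$ with $v$ adjacent to $w$ in $\mathbb{I}_n$ and $\sigma=N(v)\cup N(w)$.
   Context: $\mathbb{I}_n$ is the $n$-dimensional hypercube graph on vertex set $\{0,1\}^n$ (adjacent iff differing in exactly one coordinate), with Hamming distance $d(v,w)=\#\{i: v(i)\ne w(i)\}$, $v(i)$ the $i$-th coordinate. $\Delta_n=\mathcal{VR}(\mathbb{I}_n;3)$ is the simplicial complex whose simplices are the subsets $\sigma\subseteq\{0,1\}^n$ with $d(x,y)\le 3$ for all $x,y\in\sigma$. A simplex $\sigma$ covers all places if for each $i\in[n]=\{1,\dots,n\}$ there are $v,w\in\sigma$ with $v(i)=1$ and $w(i)=0$. $N(v)$ denotes the set of the $n$ vertices adjacent to $v$ in $\mathbb{I}_n$. *)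

From mathcomp Require Import all_boot.
Set Implicit Arguments. Unset Strict Implicit. Unset Printing Implicit Defensive.

(* Vertices of the hypercube I_n: functions [n] -> {0,1}, coordinates indexed by 'I_n. *)
Definition vert (n : nat) := {ffun 'I_n -> bool}.

Definition hdist (n : nat) (v w : vert n) : nat := #|[set i | v i != w i]|.

Definition adj (n : nat) (v w : vert n) : bool := hdist v w == 1.

Definition nbhd (n : nat) (v : vert n) : {set vert n} := [set w | adj v w].

(* simplices of Delta_n = VR(I_n; 3): nonempty vertex sets of diameter <= 3 *)
Definition is_simplex (n : nat) (s : {set vert n}) : bool :=
  (s != set0) && [forall x in s, forall y in s, hdist x y <= 3].

Definition is_maximal_simplex (n : nat) (s : {set vert n}) : bool :=
  is_simplex s && [forall t : {set vert n}, (s \proper t) ==> ~~ is_simplex t].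

Definition covers_all_places (n : nat) (s : {set vert n}) : bool :=
  [forall i : 'I_n, exists v in s, exists w in s, v i && ~~ w i].

From mathcomp Require Import all_boot zify.
Set Implicit Arguments. Unset Strict Implicit. Unset Printing Implicit Defensive.

(** Fix b in s. Two neighbours b + e_i, b + e_j of b lie in s, and every vertex
   of s at odd distance from b is adjacent to b or to the opposite corner
   b + e_i + e_j. Both cannot be needed: that would give either two vertices of
   s at distance 4, or a tetrahedron b + e_i, b + e_j, b + e_k, b + e_i + e_j + e_k
   in s, which the covering and degree conditions rule out by a parity argument.
   So the odd layer of s around b lies in N(x) for some x at even distance from b;
   the same argument for b + e_i yields y with the even layer in N(y). Then
   d(x, y) is odd and at most 3, and d(x, y) = 3 is impossible at a coordinate
   where x and y agree. Hence s lies in the simplex N(x) ∪ N(y) with x ~ y, and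
   maximality gives equality. *)

Definition flip n (u : vert n) (i : 'I_n) : vert n :=
  [ffun m => if m == i then ~~ u m else u m].

Section Hypercube.

Variable n : nat.
Implicit Types (o u v w x y z : vert n) (i j k m c : 'I_n).

Lemma flipE u i m : flip u i m = if m == i then ~~ u i else u m.
Proof. by rewrite ffunE; case: eqP => // ->. Qed.

Lemma flipK u i : flip (flip u i) i = u.
Proof.
by apply/ffunP => m; rewrite !flipE eqxx; case: eqP => [->|]; rewrite ?negbK.
Qed.

Lemma flipC u i j : flip (flip u i) j = flip (flip u j) i.
Proof. by apply/ffunP => m; rewrite !ffunE; case: (m =P i); case: (m =P j). Qed.

Lemma hdistE u v : hdist u v = \sum_m (u m != v m).
Proof. by rewrite /hdist -sum1_card big_mkcond; apply: eq_bigr => m _; rewrite inE. Qed.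

Lemma hdistC u v : hdist u v = hdist v u.
Proof. by rewrite !hdistE; apply: eq_bigr => m _; rewrite eq_sym. Qed.

Lemma hdistxx u : hdist u u = 0.
Proof. by rewrite hdistE big1 // => m _; rewrite eqxx. Qed.

(* Phrased additively to avoid truncated subtraction. *)
Lemma hdist_flip u v i :
  hdist u (flip v i) + (u i != v i) = hdist u v + (u i == v i).
Proof.
rewrite !hdistE (bigD1 i) //= [in RHS](bigD1 i) //= flipE eqxx.
under eq_bigr => m /negbTE mi do rewrite flipE mi.
by case: (u i); case: (v i) => /=; lia.
Qed.

Lemma hdist_triangle u v w : hdist u w <= hdist u v + hdist v w.
Proof.
rewrite !hdistE -big_split /=; apply: leq_sum => m _.
by case: (u m); case: (v m); case: (w m).
Qed.

Lemma odd_hdist_trans u v w :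
  odd (hdist u w) = odd (hdist u v) (+) odd (hdist v w).
Proof.
rewrite !hdistE !(big_morph odd oddD (erefl : odd 0 = false)) -big_split /=.
by apply: eq_bigr => m _; case: (u m); case: (v m); case: (w m).
Qed.

Lemma adj_flip u i : adj u (flip u i).
Proof. by rewrite /adj; have := hdist_flip u u i; rewrite eqxx hdistxx => /eqP; lia. Qed.

Lemma odd_hdist_flip u v i : odd (hdist u (flip v i)) = ~~ odd (hdist u v).
Proof. by rewrite (odd_hdist_trans u v) (eqP (adj_flip v i)) addbT. Qed.

Lemma adjC u v : adj u v = adj v u.
Proof. by rewrite /adj hdistC. Qed.

Lemma adj_flipP u v : adj u v -> exists i, v = flip u i.
Proof.
move=> /cards1P [i diff_i]; exists i; apply/ffunP => m.
have := erefl (m \in [set m | u m != v m]); rewrite [in RHS]diff_i !inE flipE.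
by case: (m =P i) => [->|_]; case: (u _); case: (v _).
Qed.

Lemma sum_diff_le_hdist (ms : seq 'I_n) u v :
  uniq ms -> \sum_(m <- ms) (u m != v m) <= hdist u v.
Proof.
move=> ms_uniq; rewrite hdistE.
apply: (@uniq_sub_le_big _ _ leq) => //; first by move=> a b; apply: leq_addr.
- exact: index_enum_uniq.
- by move=> m _; rewrite mem_index_enum.
Qed.

Lemma exists_coord_notin (A : {pred 'I_n}) : #|A| < n -> exists c, c \notin A.
Proof.
move=> An; have /card_gt0P [c Ac] : 0 < #|[predC A]|.
  by rewrite -(ltn_add2l #|A|) cardC card_ord addn0.
by exists c.
Qed.

Lemma hdist_step_away x y z c :
  x c = y c -> adj x z -> z c != x c -> hdist z y = (hdist x y).+1.
Proof.
move=> xy_c /adj_flipP [i ->]; rewrite flipE.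
case: (eqVneq c i) => [<- _|_]; last by rewrite eqxx.
by have := hdist_flip y x c; rewrite hdistC [hdist y x]hdistC xy_c eqxx; lia.
Qed.

Lemma hdist_le3_of_adj x y u v : adj x u -> adj y v -> hdist x y <= 1 -> hdist u v <= 3.
Proof.
move=> /eqP xu /eqP yv xy; rewrite hdistC in xu.
have := hdist_triangle u x v; have := hdist_triangle x y v; lia.
Qed.

(* The four constraints force y to differ from o in an odd number of the
   coordinates i, j, k and, outside them, only at c; so d(y, o) is even. *)
Lemma hdist_tetra_even o y i j k c :
  uniq [:: k; j; i; c] -> y c != o c ->
  hdist y (flip o i) <= 3 -> hdist y (flip o j) <= 3 -> hdist y (flip o k) <= 3 ->
  hdist y (flip (flip (flip o i) j) k) <= 3 -> ~~ odd (hdist y o).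
Proof.
move=> kjic yc ? ? ? ?.
have lb := sum_diff_le_hdist y o kjic; rewrite !big_cons big_nil yc in lb.
move: kjic; rewrite /= !inE !negb_or => /and4P [/and3P [kj ki _] /andP [ji _] _ _].
have Hi := hdist_flip y o i; have Hj := hdist_flip y o j; have Hk := hdist_flip y o k.
have Hij := hdist_flip y (flip o i) j; have Hijk := hdist_flip y (flip (flip o i) j) k.
rewrite !flipE (negbTE ji) (negbTE ki) (negbTE kj) in Hij Hijk.
suff: hdist y o = 2 \/ hdist y o = 4 by case=> ->.
by case: (y i == o i) Hi Hij Hijk lb; case: (y j == o j) Hj; case: (y k == o k) Hk => /=; lia.
Qed.

End Hypercube.

Lemma simplex_neq0 n (s : {set vert n}) : is_simplex s -> s != set0.
Proof. by case/andP. Qed.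

Lemma simplex_diam n (s : {set vert n}) :
  is_simplex s -> {in s &, forall x y, hdist x y <= 3}.
Proof.
by case/andP => _ /forall_inP diam x y xs ys; move/forall_inP: (diam x xs); apply.
Qed.

Lemma maximal_simplex_eq n (s t : {set vert n}) :
  is_maximal_simplex s -> s \subset t -> is_simplex t -> s = t.
Proof.
case/andP => _ /forallP s_max /eqVproper [//|st] t_simplex.
by have := s_max t; rewrite st t_simplex.
Qed.

Lemma nbhdU_simplex n (x y : vert n) : adj x y -> is_simplex (nbhd x :|: nbhd y).
Proof.
move=> xy; apply/andP; split; first by apply/set0Pn; exists y; rewrite !inE xy.
have xy1 : hdist x y <= 1 by rewrite (eqP xy).
have yx1 : hdist y x <= 1 by rewrite hdistC (eqP xy).
apply/forall_inP => u; rewrite !inE => /orP u_adj.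
apply/forall_inP => v; rewrite !inE => /orP v_adj.
by case: u_adj v_adj => xu [] yv; apply: (hdist_le3_of_adj xu yv); rewrite ?hdistxx.
Qed.

Section CoveringSimplex.

Variables (n : nat) (s : {set vert n}).
Hypothesis n_ge4 : 3 < n.
Hypothesis s_diam : {in s &, forall x y, hdist x y <= 3}.
Hypothesis s_cov : covers_all_places s.
Hypothesis s_deg : forall w, w \in s -> 2 <= #|nbhd w :&: s|.
Implicit Types (b e o u v w x y z : vert n) (i j k m c : 'I_n).

Lemma two_flips_in w : w \in s -> exists i j, [/\ i != j, flip w i \in s & flip w j \in s].
Proof.
move=> /s_deg /card_gt1P [u [v [/setIP [u_adj us] /setIP [v_adj vs] uv]]].
rewrite !inE in u_adj v_adj.
have [i ui] := adj_flipP u_adj; have [j vj] := adj_flipP v_adj.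
by exists i, j; rewrite -ui -vj; split => //; apply: contraNneq uv => ij; rewrite ui vj ij.
Qed.

Lemma flip_in_avoiding w c : w \in s -> exists2 p, p != c & flip w p \in s.
Proof.
move=> /two_flips_in [i [j [ij wis wjs]]].
by case: (eqVneq i c) => [ic|]; [exists j => //; rewrite -ic eq_sym | exists i].
Qed.

Lemma differs_at c u : exists2 z, z \in s & z c != u c.
Proof.
have /forallP/(_ c)/exists_inP [v vs /exists_inP [w ws /andP [vc wc]]] := s_cov.
case: (eqVneq (v c) (u c)) => [vuc|vuc]; last by exists v.
by exists w; rewrite // -vuc vc (negbTE wc).
Qed.

Lemma no_tetrahedron o i j k : uniq [:: k; j; i] ->
  flip o i \in s -> flip o j \in s -> flip o k \in s ->
  flip (flip (flip o i) j) k \in s -> False.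
Proof.
move=> kji ois ojs oks oijks.
have [c c_out] := exists_coord_notin (leq_ltn_trans (card_size [:: k; j; i]) n_ge4).
have kjic : uniq [:: k; j; i; c].
  by rewrite -[[:: k; j; i; c]]/(rcons [:: k; j; i] c) rcons_uniq c_out.
have even_in w : w \in s -> w c != o c -> ~~ odd (hdist w o).
  by move=> ws wc; apply: (hdist_tetra_even kjic wc); apply: s_diam.
have [z zs zc] := differs_at c o.
have [p pc zps] := flip_in_avoiding c zs.
(* z and its neighbour flip z p would both be at even distance from o. *)
have zpc : flip z p c != o c by rewrite flipE (eq_sym c) (negbTE pc).
have := even_in _ zps zpc; rewrite hdistC odd_hdist_flip hdistC negbK.
by rewrite (negbTE (even_in _ zs zc)).
Qed.

Lemma odd_adj_or_adj_opposite b i j e : j != i -> flip b i \in s -> flip b j \in s ->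
  e \in s -> odd (hdist b e) -> adj b e \/ adj (flip (flip b i) j) e.
Proof.
move=> ji bis bjs es; rewrite /adj !(hdistC _ e) => odd_eb.
have d13 : hdist e b = 1 \/ hdist e b = 3.
  have : hdist e b <= 4 by have := hdist_flip e b i; have := s_diam es bis; lia.
  by move: odd_eb; case: (hdist e b) => [|[|[|[|[|d]]]]] //= _ _; [left | right].
have Hi := hdist_flip e b i; have Hj := hdist_flip e b j.
have Hij := hdist_flip e (flip b i) j; rewrite flipE (negbTE ji) in Hij.
have := s_diam es bis; have := s_diam es bjs.
by case: (e i == b i) Hi Hij; case: (e j == b j) Hj => /=; lia.
Qed.

Lemma no_split_odd_layer b i j e e' : j != i -> flip b i \in s -> flip b j \in s ->
  e \in s -> e' \in s -> adj b e -> ~~ adj (flip (flip b i) j) e ->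
  adj (flip (flip b i) j) e' -> ~~ adj b e' -> False.
Proof.
set o := flip (flip b i) j.
move=> ji bis bjs es e's /adj_flipP [k ek] o_e /adj_flipP [m e'm] b_e'.
have [ki kj] : k != i /\ k != j.
  split; apply: contraNneq o_e => kij; rewrite ek kij adjC /o ?adj_flip //.
  by rewrite flipC adj_flip.
have [mi mj] : m != i /\ m != j.
  split; apply: contraNneq b_e' => mij; rewrite e'm mij /o ?flipK ?adj_flip //.
  by rewrite flipC flipK adj_flip.
case: (eqVneq k m) => [km | km].
  have kji : uniq [:: k; j; i] by rewrite /= !inE !negb_or ki kj ji.
  by apply: (no_tetrahedron kji bis bjs); rewrite -?ek // -/o km -e'm.
have := s_diam es e's; rewrite ek e'm.
have kmji : uniq [:: k; m; j; i] by rewrite /= !inE !negb_or km ki kj mi mj ji.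
have := sum_diff_le_hdist (flip b k) (flip o m) kmji.
rewrite !big_cons big_nil /o !flipE !eqxx (eq_sym m k) (eq_sym j k) (eq_sym i k).
rewrite (eq_sym j m) (eq_sym i m) (eq_sym i j).
rewrite (negbTE km) (negbTE kj) (negbTE ki) (negbTE mj) (negbTE mi) (negbTE ji).
have bit (a : bool) : (a != ~~ a) * (~~ a != a) by case: a.
by rewrite !bit => lb /(leq_trans lb).
Qed.

Lemma exists_odd_layer_hub b : b \in s ->
  exists x, ~~ odd (hdist b x) /\ {in s, forall e, odd (hdist b e) -> adj x e}.
Proof.
move=> bs; have [j [i [ji bjs bis]]] := two_flips_in bs.
set o := flip (flip b i) j.
have near_b_or_o := odd_adj_or_adj_opposite ji bis bjs.
case: (boolP [exists e in s, odd (hdist b e) && ~~ adj b e]).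
  case/exists_inP => e' e's /andP [odd_e' b_e']; exists o; split.
    by rewrite !odd_hdist_flip hdistxx.
  have o_e' : adj o e'.
    by case: (near_b_or_o e' e's odd_e') => // b_e'_adj; rewrite b_e'_adj in b_e'.
  move=> e es odd_e; case: (near_b_or_o e es odd_e) => // b_e.
  by apply/negPn/negP => o_e; apply: (no_split_odd_layer ji bis bjs es e's b_e o_e o_e' b_e').
move/exists_inPn => all_near_b; exists b; split; first by rewrite hdistxx.
by move=> e es odd_e; have := all_near_b e es; rewrite odd_e negbK.
Qed.

Lemma parity_cover_hdist_neq3 b x y :
  {in s, forall e, if odd (hdist b e) then adj x e else adj y e} -> hdist x y != 3.
Proof.
move=> cover; apply/eqP => xy3.
have [c] : exists c, c \notin [set m | x m != y m].
  by apply: exists_coord_notin; rewrite -/(hdist x y) xy3.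
rewrite inE negbK => /eqP xy_c.
have [z zs zxc] := differs_at c x.
have [p [_ [_ zps _]]] := two_flips_in zs.
have detour u v : hdist u v = 3 -> u c = v c -> adj u z -> z c != u c ->
    adj v (flip z p) -> False.
  move=> uv3 uv_c uz zuc /eqP vzp; have := hdist_triangle z (flip z p) v.
  by rewrite (hdist_step_away uv_c uz zuc) uv3 (eqP (adj_flip z p)) hdistC vzp.
have := cover _ zps; rewrite odd_hdist_flip.
case: (odd (hdist b z)) (cover _ zs) => /= [xz yzp | yz xzp].
  exact: (detour x y xy3 xy_c xz zxc yzp).
by apply: (detour y x _ _ yz _ xzp); rewrite -?xy_c // hdistC.
Qed.

Lemma adjacent_cover : s != set0 ->
  exists x y, adj x y /\ s \subset nbhd x :|: nbhd y.
Proof.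
case/set0Pn => b bs; have [i [_ [_ bis _]]] := two_flips_in bs.
have [x [b_x x_hub]] := exists_odd_layer_hub bs.
have [y [bi_y y_hub]] := exists_odd_layer_hub bis.
have cover : {in s, forall e, if odd (hdist b e) then adj x e else adj y e}.
  move=> e es; case: ifP => odd_e; first exact: x_hub.
  by apply: y_hub => //; rewrite hdistC odd_hdist_flip hdistC odd_e.
have odd_xy : odd (hdist x y).
  rewrite (odd_hdist_trans x b) (odd_hdist_trans b (flip b i)) hdistC.
  by rewrite (negbTE b_x) (negbTE bi_y) (eqP (adj_flip b i)).
have xy_le3 : hdist x y <= 3.
  have /eqP x_bi : adj x (flip b i) by have := cover _ bis; rewrite odd_hdist_flip hdistxx.
  have /eqP y_b : adj y b by have := cover _ bs; rewrite hdistxx.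
  have := hdist_triangle x (flip b i) y; have := hdist_triangle (flip b i) b y.
  by rewrite [hdist (flip b i) b]hdistC (eqP (adj_flip b i)) x_bi [hdist b y]hdistC y_b; lia.
have xy_neq3 := parity_cover_hdist_neq3 cover.
exists x, y; split.
  by rewrite /adj; move: odd_xy xy_le3 xy_neq3; case: (hdist x y) => [|[|[|[|d]]]].
by apply/subsetP => e es; have := cover e es; rewrite !inE; case: odd => ->; rewrite ?orbT.
Qed.

End CoveringSimplex.

Theorem mainTheorem11 (n : nat) (s : {set vert n}) :
  5 <= n ->
  is_maximal_simplex s ->
  covers_all_places s ->
  (forall w, w \in s -> 2 <= #|nbhd w :&: s|) ->
  exists v w, [/\ v \in s, w \in s, adj v w & s = nbhd v :|: nbhd w].
Proof.
move=> n_ge5 s_max s_cov s_deg.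
have s_simplex : is_simplex s by case/andP: s_max.
have [x [y [xy s_sub]]] := adjacent_cover (ltnW n_ge5) (simplex_diam s_simplex) s_cov s_deg
  (simplex_neq0 s_simplex).
exists x, y; rewrite (maximal_simplex_eq s_max s_sub (nbhdU_simplex xy)) !inE adjC xy orbT.
by split.
Qed.
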